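(* Let $F$ be a finite field of odd characteristic in which $-1$ is not a square, let $z,z'\in F$ with $z\neq z'$, and let $g_z,g_{z'}:F^3\to\mathbb{C}$ be functions supported on the planes $\{x_3=z\}$ and $\{x_3=z'\}$ respectively, each $\sim1$ on its support, with $G_z=\{\underline{x}\in F^2:g_z(\underline{x},z)\ne0\}$ and $G_{z'}=\{\underline{x}\in F^2:g_{z'}(\underline{x},z')\ne0\}$. Then $$\big\|(g_z*K)\,(g_{z'}*K)\big\|_{L^2(F^3)}^2 \lesssim |F|^{-1}|G_z|\,|G_{z'}| + |F|^{-2}\,\mathcal{B}(G_z,G_{z'}),$$ where $\mathcal{B}(A,B):=\min\{\mathcal{T}(A,B),\ |F|\,(\mathcal{R}(A)\mathcal{R}(B))^{1/2}\}$.
   Context: $e:(F,+)\to\mathbb{C}^\times$ is a fixed nontrivial additive character; $x\cdot y=\sum_i x_iy_i$; points of $F^3$ are $x=(\underline{x},x_3)$. $P=\{(\underline{x},\underline{x}\cdot\underline{x}):\underline{x}\in F^2\}$. $F^3$ carries counting measure, $(h_1*h_2)(x)=\sum_y h_1(y)h_2(x-y)$. $(d\sigma)^{\vee}(x)=|F|^{-2}\sum_{\xi\in P}e(x\cdot\xi)$, $\delta$ the indicator of $0$, $K:=(d\sigma)^{\vee}-\delta$. ''$h\sim1$ on its support'' means $\tfrac12\le|h|\le2$ wherever $h\ne0$. For $x_0,x_1,x_2\in F^2$, $(x_0,x_1,x_2)$ is a corner if $(x_1-x_0)\cdot(x_2-x_1)=0$; $(x_0,x_1,x_2,x_3)\in(F^2)^4$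 is a rectangle if $(x_i,x_{i+1},x_{i+2})$ is a corner for each $i\in\{0,1,2,3\}$, indices mod 4; $\mathcal{R}(A)$ is the number of rectangles in $A^4$. A quadruple $(x_1,x_2,x_3,x_4)$ in $F^2$ is a trapezoid if $x_1-x_2=\lambda(x_3-x_4)$ for some $\lambda\in F$; $\mathcal{T}(A,B)$ is the number of trapezoids with $x_1,x_2\in A$, $x_3,x_4\in B$. $X\lesssim Y$ means $X\le CY$ with $C$ absolute. *)

From HB Require Import structures.
From mathcomp Require Import all_boot all_order all_algebra.
Set Implicit Arguments. Unset Strict Implicit. Unset Printing Implicit Defensive.
Import Order.TTheory GRing.Theory Num.Theory.
Local Open Scope ring_scope.

Section Defs.
Variables (F : finFieldType) (C : numClosedFieldType).

(* F^2 is F * F ; F^3 is (F * F) * F, x = (x.1, x.2) = (underline x, x_3). *)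
Definition dot2 (a b : F * F) : F := a.1 * b.1 + a.2 * b.2.
Definition dot3 (x y : F * F * F) : F := dot2 x.1 y.1 + x.2 * y.2.
Definition sub2 (a b : F * F) : F * F := (a.1 - b.1, a.2 - b.2).
Definition sub3 (x y : F * F * F) : F * F * F := (sub2 x.1 y.1, x.2 - y.2).
Definition zero3 : F * F * F := ((0, 0), 0).

Definition nontrivial_additive_character (e : F -> C) : Prop :=
  (forall x y, e (x + y) = e x * e y) /\ (forall x, e x != 0) /\
  (exists x, e x != 1).

Definition conv3 (h1 h2 : F * F * F -> C) (x : F * F * F) : C :=
  \sum_(y : F * F * F) h1 y * h2 (sub3 x y).

(* (d sigma)^vee (x) = |F|^{-2} sum_{xi in P} e(x . xi),
   P = {(xi, xi . xi) : xi in F^2} *)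
Definition dsigma_check (e : F -> C) (x : F * F * F) : C :=
  (#|F|%:R ^+ 2)^-1 * \sum_(xi : F * F) e (dot3 x (xi, dot2 xi xi)).

Definition delta3 (x : F * F * F) : C := if x == zero3 then 1 else 0.

Definition Kker (e : F -> C) (x : F * F * F) : C := dsigma_check e x - delta3 x.

Definition L2sq (h : F * F * F -> C) : C := \sum_(x : F * F * F) `|h x| ^+ 2.

Definition sim1_on_support (h : F * F * F -> C) : Prop :=
  forall x, h x != 0 -> 2^-1 <= `|h x| <= 2.

Definition supported_on_plane (h : F * F * F -> C) (z : F) : Prop :=
  forall x, x.2 != z -> h x = 0.

Definition slice_support (h : F * F * F -> C) (z : F) : {set F * F} :=
  [set u : F * F | h (u, z) != 0].

Definition corner (x0 x1 x2 : F * F) : bool :=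
  dot2 (sub2 x1 x0) (sub2 x2 x1) == 0.

Definition rectangle (x0 x1 x2 x3 : F * F) : bool :=
  [&& corner x0 x1 x2, corner x1 x2 x3, corner x2 x3 x0 & corner x3 x0 x1].

Definition Rcount (A : {set F * F}) : nat :=
  #|[set t : (F * F) * (F * F) * (F * F) * (F * F) |
      [&& t.1.1.1 \in A, t.1.1.2 \in A, t.1.2 \in A, t.2 \in A &
          rectangle t.1.1.1 t.1.1.2 t.1.2 t.2]]|.

Definition trapezoid (x1 x2 x3 x4 : F * F) : bool :=
  [exists l : F, sub2 x1 x2 == (l * (sub2 x3 x4).1, l * (sub2 x3 x4).2)].

Definition Tcount (A B : {set F * F}) : nat :=
  #|[set t : (F * F) * (F * F) * (F * F) * (F * F) |
      [&& t.1.1.1 \in A, t.1.1.2 \in A, t.1.2 \in B, t.2 \in B &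
          trapezoid t.1.1.1 t.1.1.2 t.1.2 t.2]]|.

Definition Bq (A B : {set F * F}) : C :=
  Num.min (Tcount A B)%:R (#|F|%:R * sqrtC ((Rcount A * Rcount B)%:R)).

End Defs.

(* On a plane at height t, g * K with g carried by the plane at height z is,
   up to a unimodular factor, |F|^-1 times a sum of the slice of g against the
   phase e(r|u|^2 + y.u), r = -1/(4(t - z)): the Gauss sums in K have modulus
   |F|^(1/2).  Hence the L^2 norm of the product on that plane is a fourth
   moment, which orthogonality of characters turns into a count of quadruples
   (x1,x2) in G_z^2, (x3,x4) in G_z'^2 with (t-z')(x1-x2) + (t-z)(x3-x4) = 0.
   Summed over t, a non-degenerate quadruple is counted at most once and is
   then a trapezoid; degenerate ones contribute |F||G_z||G_z'|.  Alternatively,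
   Cauchy-Schwarz reduces to the fourth moment of each factor; summing the
   phases over t forces x1 - x2 + x3 - x4 = 0 and |x1|^2 - |x2|^2 + |x3|^2 -
   |x4|^2 = 0, which (for odd characteristic) means (x1,x2,x3,x4) is a
   rectangle. *)

From HB Require Import structures.
From mathcomp Require Import all_boot all_order all_algebra all_field.
From mathcomp Require Import ring.
Set Implicit Arguments. Unset Strict Implicit. Unset Printing Implicit Defensive.
Import Order.TTheory GRing.Theory Num.Theory.
Local Open Scope ring_scope.

Lemma sum_pair (R : nmodType) (T U : finType) (f : T * U -> R) :
  \sum_p f p = \sum_a \sum_b f (a, b).
Proof. by rewrite pair_big; apply: eq_bigr => -[]. Qed.

Lemma sum_pairM (R : pzSemiRingType) (T U : finType) (f : T -> R) (g : U -> R) :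
  \sum_(p : T * U) f p.1 * g p.2 = (\sum_a f a) * (\sum_b g b).
Proof. by rewrite big_distrlr pair_big. Qed.

Lemma sum_quadM (R : comPzSemiRingType) (T : finType) (f1 f2 f3 f4 : T -> R) :
  (\sum_a f1 a) * (\sum_b f2 b) * (\sum_c f3 c) * (\sum_d f4 d) =
  \sum_(t : T * T * T * T) f1 t.1.1.1 * f2 t.1.1.2 * f3 t.1.2 * f4 t.2.
Proof.
rewrite -(sum_pairM f1 f2) -(sum_pairM (fun p => f1 p.1 * f2 p.2) f3).
by rewrite -(sum_pairM (fun p => f1 p.1.1 * f2 p.1.2 * f3 p.2) f4).
Qed.

Lemma sumr_ge0_fin (R : numDomainType) (T : finType) (f : T -> R) :
  (forall x, 0 <= f x) -> 0 <= \sum_x f x.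
Proof. by move=> f_ge0; apply: sumr_ge0 => x _. Qed.

Lemma CauchySchwarz_nneg (R : numDomainType) (T : finType) (f g : T -> R) :
  (forall x, 0 <= f x) -> (forall x, 0 <= g x) ->
  (\sum_x f x * g x) ^+ 2 <= (\sum_x f x ^+ 2) * (\sum_x g x ^+ 2).
Proof.
move=> f_ge0 g_ge0.
suff : (\sum_x f x * g x) ^+ 2 *+ 2 <= ((\sum_x f x ^+ 2) * (\sum_x g x ^+ 2)) *+ 2.
  by rewrite lerMn2r.
have -> : (\sum_x f x * g x) ^+ 2 = \sum_i \sum_j (f i * g j) * (f j * g i).
  rewrite expr2 big_distrlr; apply: eq_bigr => i _; apply: eq_bigr => j _ /=.
  by rewrite mulrACA [RHS]mulrACA [g j * _]mulrC.
have -> : ((\sum_x f x ^+ 2) * (\sum_x g x ^+ 2)) *+ 2 =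
          \sum_i \sum_j ((f i * g j) ^+ 2 + (f j * g i) ^+ 2).
  rewrite big_distrlr mulr2n {2}exchange_big -big_split /=.
  by apply: eq_bigr => i _; rewrite -big_split; apply: eq_bigr => j _; rewrite !exprMn.
rewrite -sumrMnl; apply: ler_sum => i _; rewrite -sumrMnl; apply: ler_sum => j _.
by apply: (real_leif_mean_square_scaled _ _).1; apply: ger0_real; rewrite mulr_ge0.
Qed.

Lemma sum_nat_boolE (T : finType) (P : pred T) :
  (\sum_t (P t : nat))%N = #|[set t | P t]|.
Proof. by rewrite -sum1dep_card [RHS]big_mkcond; apply: eq_bigr => t _; case: (P t). Qed.

Lemma pencil_eq0 (K : fieldType) (z z' t1 t2 d f : K) : z != z' -> t1 != t2 ->
  (t1 - z') * d + (t1 - z) * f = 0 -> (t2 - z') * d + (t2 - z) * f = 0 ->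
  d = 0 /\ f = 0.
Proof.
move=> z_neq_z' t12 eq1 eq2.
have : (t1 - t2) * (d + f) = 0.
  have -> : (t1 - t2) * (d + f) =
    (t1 - z') * d + (t1 - z) * f - ((t2 - z') * d + (t2 - z) * f) by ring.
  by rewrite eq1 eq2 subrr.
move/eqP; rewrite mulf_eq0 subr_eq0 (negPf t12) /= addr_eq0 => /eqP d_eq.
have : (z' - z) * f = 0.
  have -> : (z' - z) * f = (t1 - z') * (- f) + (t1 - z) * f by ring.
  by rewrite -d_eq.
move/eqP; rewrite mulf_eq0 subr_eq0 eq_sym (negPf z_neq_z') /= => /eqP f0.
by rewrite d_eq f0 oppr0.
Qed.

Section Fourier.
Variables (F : finFieldType) (C : numClosedFieldType) (e : F -> C).
Hypothesis charD : forall x y, e (x + y) = e x * e y.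
Hypothesis char_neq0 : forall x, e x != 0.
Hypothesis char_nontrivial : exists x, e x != 1.

Local Notation q := (#|F|%:R : C).

Lemma char0 : e 0 = 1.
Proof. by apply: (mulIf (char_neq0 0)); rewrite -charD !addr0 mul1r. Qed.

Lemma charN x : e (- x) = (e x)^-1.
Proof. by apply: (mulIf (char_neq0 x)); rewrite -charD addNr char0 mulVf. Qed.

Lemma charMn x n : e (x *+ n) = e x ^+ n.
Proof. by elim: n => [|n IH]; rewrite ?mulr0n ?char0 // mulrS charD IH exprS. Qed.

Lemma norm_char x : `|e x| = 1.
Proof.
have [p p_pr p_char] := finPcharP F.
have : `|e x| ^+ p == 1.
  by rewrite -normrX -charMn (mulrn_pchar p_char) char0 normr1.
by rewrite pexpr_eq1 ?prime_gt0 // => /eqP.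
Qed.

Lemma conj_char x : (e x)^* = e (- x).
Proof.
by rewrite charN; apply: (mulfI (char_neq0 x)); rewrite mulfV // -normCK norm_char expr1n.
Qed.

Lemma q_gt0 : 0 < q.
Proof. by rewrite ltr0n; apply/card_gt0P; exists 0. Qed.

Lemma q_neq0 : q != 0.
Proof. exact: lt0r_neq0 q_gt0. Qed.

Lemma sum_char_mul (k : F) : \sum_b e (b * k) = if k == 0 then q else 0.
Proof.
have [->|k_neq0] := eqVneq k 0.
  by under eq_bigr do rewrite mulr0 char0; rewrite sumr_const.
rewrite (reindex_inj (mulIf (invr_neq0 k_neq0))) /=.
under eq_bigr do rewrite divfK //.
have [x0 ex0_neq1] := char_nontrivial.
have sum_invariant : \sum_b e b = e x0 * \sum_b e b.
  by rewrite {1}(reindex_inj (addrI x0)) mulr_sumr; apply: eq_bigr => b _; rewrite charD.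
have : (1 - e x0) * \sum_b e b = 0 by rewrite mulrBl mul1r -sum_invariant subrr.
by move/eqP; rewrite mulf_eq0 subr_eq0 eq_sym (negPf ex0_neq1) => /eqP.
Qed.

Lemma sum_char_dot2 (w : F * F) :
  \sum_(x : F * F) e (dot2 x w) = if w == (0, 0) then q ^+ 2 else 0.
Proof.
under eq_bigr do rewrite charD.
rewrite (sum_pairM (fun a => e (a * w.1)) (fun b => e (b * w.2))) !sum_char_mul.
by case: w => a b; rewrite xpair_eqE /=; case: (a == 0); case: (b == 0); rewrite ?mulr0 ?mul0r.
Qed.

Definition scale2 (c : F) (v : F * F) : F * F := (c * v.1, c * v.2).
Definition add2 (a b : F * F) : F * F := (a.1 + b.1, a.2 + b.2).

Local Notation quad := ((F * F) * (F * F) * (F * F) * (F * F))%type.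

(* Up to a unimodular factor and [|F|^-1], [g * K] on the plane at height [t] is
   [ext_sum] of the slice of [g] at height [z], with [r] and the dilation of [y]
   determined by [t - z]. *)
Definition ext_sum (h : F * F -> C) (r : F) (y : F * F) : C :=
  \sum_u h u * e (r * dot2 u u + dot2 y u).

Definition weight4 (h1 h2 : F * F -> C) (t : quad) : C :=
  h1 t.1.1.1 * (h1 t.1.1.2)^* * h2 t.1.2 * (h2 t.2)^*.

Definition phase4 (r1 r2 : F) (t : quad) : F :=
  r1 * (dot2 t.1.1.1 t.1.1.1 - dot2 t.1.1.2 t.1.1.2) +
  r2 * (dot2 t.1.2 t.1.2 - dot2 t.2 t.2).

Definition diff4 (c1 c2 : F) (t : quad) : F * F :=
  add2 (scale2 c1 (sub2 t.1.1.1 t.1.1.2)) (scale2 c2 (sub2 t.1.2 t.2)).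

Definition moment4 (h1 h2 : F * F -> C) (r1 r2 c1 c2 : F) : C :=
  \sum_(t : quad) weight4 h1 h2 t * e (phase4 r1 r2 t) *
                  (if diff4 c1 c2 t == (0, 0) then q ^+ 2 else 0).

Lemma conj_ext_sum h r y :
  (ext_sum h r y)^* = \sum_u (h u)^* * e (- (r * dot2 u u + dot2 y u)).
Proof.
by rewrite rmorph_sum; apply: eq_bigr => u _; rewrite rmorphM /= conj_char.
Qed.

Lemma sum_ext_sum4 h1 h2 r1 r2 c1 c2 :
  \sum_x `|ext_sum h1 r1 (scale2 c1 x)| ^+ 2 * `|ext_sum h2 r2 (scale2 c2 x)| ^+ 2 =
  moment4 h1 h2 r1 r2 c1 c2.
Proof.
under eq_bigr do rewrite !normCK !conj_ext_sum mulrA sum_quadM.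
rewrite exchange_big; apply: eq_bigr => t _.
rewrite -sum_char_dot2 !mulr_sumr; apply: eq_bigr => x _.
have shuffle (a b c d u v w y : C) :
  a * u * (b * v) * (c * w) * (d * y) = a * b * c * d * (u * v * w * y) by ring.
rewrite shuffle /weight4 -[RHS]mulrA -!charD; congr (_ * e _).
by rewrite /phase4 /diff4 /dot2 /add2 /scale2 /sub2 /=; ring.
Qed.

Definition bounded2_on (h : F * F -> C) (A : {set F * F}) : Prop :=
  forall u, `|h u| <= 2 * (u \in A)%:R.

Definition in4 (A B : {set F * F}) (t : quad) : bool :=
  [&& t.1.1.1 \in A, t.1.1.2 \in A, t.1.2 \in B & t.2 \in B].

Lemma norm_weight4_le h1 h2 A B t : bounded2_on h1 A -> bounded2_on h2 B ->
  `|weight4 h1 h2 t| <= 16 * (in4 A B t)%:R.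
Proof.
move=> h1A h2B; rewrite /weight4 !normrM !norm_conjC.
have -> : 16 * (in4 A B t)%:R = 2 * (t.1.1.1 \in A)%:R * (2 * (t.1.1.2 \in A)%:R) *
                                 (2 * (t.1.2 \in B)%:R) * (2 * (t.2 \in B)%:R) :> C.
  by rewrite /in4 -!mulnb !natrM; ring.
by rewrite !ler_pM ?mulr_ge0 ?normr_ge0.
Qed.

Lemma norm_moment4_le h1 h2 A B r1 r2 c1 c2 : bounded2_on h1 A -> bounded2_on h2 B ->
  `|moment4 h1 h2 r1 r2 c1 c2| <=
  16 * q ^+ 2 * (\sum_t (in4 A B t && (diff4 c1 c2 t == (0%R, 0%R))) : nat)%:R.
Proof.
move=> h1A h2B; rewrite natr_sum mulr_sumr; apply: le_trans (ler_norm_sum _ _ _) _.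
apply: ler_sum => t _; rewrite normrM normrM norm_char mulr1.
case: (diff4 c1 c2 t == (0, 0)); rewrite ?andbF ?normr0 ?mulr0 // andbT.
rewrite [`|_ ^+ 2|]ger0_norm ?exprn_ge0 ?ler0n //.
apply: le_trans (ler_wpM2r (exprn_ge0 2 (ltW q_gt0)) (norm_weight4_le t h1A h2B)) _.
by rewrite mulrAC.
Qed.

Lemma moment4_dilate h1 h2 r1 r2 c : c != 0 ->
  moment4 h1 h2 r1 r2 c c = moment4 h1 h2 r1 r2 1 1.
Proof.
move=> c_neq0; apply: eq_bigr => tau _.
suff -> : (diff4 c c tau == (0, 0)) = (diff4 1 1 tau == (0, 0)) by [].
by rewrite /diff4 /add2 /scale2 !xpair_eqE /= -!mulrDr !mul1r !mulf_eq0 (negPf c_neq0).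
Qed.

Lemma moment4_ge0 h r : 0 <= moment4 h h r r 1 1.
Proof.
by rewrite -sum_ext_sum4; apply: sumr_ge0_fin => x; rewrite mulr_ge0 ?exprn_ge0.
Qed.

Lemma sum_moment4 h1 h2 : \sum_r moment4 h1 h2 r r 1 1 =
  q ^+ 3 * \sum_tau weight4 h1 h2 tau *
                    ((diff4 1 1 tau == (0, 0)) && (phase4 1 1 tau == 0))%:R.
Proof.
rewrite /moment4 exchange_big mulr_sumr; apply: eq_bigr => tau _.
have phaseE r : phase4 r r tau = r * phase4 1 1 tau by rewrite /phase4; ring.
under eq_bigr do rewrite phaseE mulrAC.
rewrite -mulr_sumr sum_char_mul.
by case: (_ == (0, 0)); case: (_ == 0); rewrite /= ?mulr0 ?mul0r //; ring.
Qed.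

Section OddCharacteristic.
Hypothesis two_neq0 : (2 : F) != 0.

Lemma four_neq0 : (4 : F) != 0.
Proof.
have -> : (4 : F) = 2 * 2 by ring.
by rewrite mulf_neq0.
Qed.

Definition gauss_sum (s c : F) : C := \sum_a e (c * a + s * (a * a)).

Definition ker_phase (s : F) : F := - (2 * 2 * s)^-1.

Lemma gauss_sum_shift s c : s != 0 ->
  gauss_sum s c = e (ker_phase s * (c * c)) * gauss_sum s 0.
Proof.
move=> s_neq0; rewrite /gauss_sum mulr_sumr (reindex_inj (addIr (- (c / (2 * s))))) /=.
apply: eq_bigr => a _; rewrite -charD /ker_phase; congr e.
by field; rewrite s_neq0 four_neq0 two_neq0.
Qed.

(* Expanding |G|^2 and substituting a = b + d turns the inner sum into a
   character sum in b, which vanishes unless 2 s d = 0. *)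
Lemma gauss_sum_normCK s : s != 0 -> gauss_sum s 0 * (gauss_sum s 0)^* = q.
Proof.
move=> s_neq0; rewrite /gauss_sum rmorph_sum big_distrlr exchange_big /=.
under eq_bigr do under eq_bigr do rewrite conj_char -charD.
rewrite (eq_bigr (fun b => \sum_d e (b * (2 * s * d) + s * (d * d)))); last first.
  move=> b _; rewrite (reindex_inj (addrI b)) /=; apply: eq_bigr => d _; congr e; ring.
under eq_bigr do under eq_bigr do rewrite charD.
rewrite exchange_big /=; under eq_bigr do rewrite -mulr_suml sum_char_mul.
rewrite (bigD1 0) //= big1 => [|d d_neq0]; last first.
  by rewrite !mulf_eq0 (negPf d_neq0) (negPf s_neq0) (negPf two_neq0) mul0r.
by rewrite !mulr0 eqxx char0 mulr1 addr0.
Qed.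

Lemma Kker_slice0 w : Kker e (w, 0) = 0.
Proof.
rewrite /Kker /dsigma_check /delta3 /zero3 xpair_eqE eqxx andbT.
under eq_bigr do rewrite /dot3 /= mul0r addr0 /dot2 mulrC [w.2 * _]mulrC.
rewrite sum_char_dot2; case: (w == (0, 0)); last by rewrite mulr0 subrr.
by rewrite mulVf ?subrr // expf_neq0 // q_neq0.
Qed.

Lemma KkerE s w : s != 0 ->
  Kker e (w, s) = (q ^+ 2)^-1 * e (ker_phase s * dot2 w w) * gauss_sum s 0 ^+ 2.
Proof.
move=> s_neq0; rewrite /Kker /dsigma_check /delta3 /zero3 xpair_eqE (negPf s_neq0).
rewrite andbF subr0 -mulrA; congr (_ * _).
rewrite (eq_bigr (fun xi => e (w.1 * xi.1 + s * (xi.1 * xi.1)) *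
                           e (w.2 * xi.2 + s * (xi.2 * xi.2)))); last first.
  by move=> xi _; rewrite -charD /dot3 /dot2 /=; congr e; ring.
rewrite (sum_pairM (fun a => e (w.1 * a + s * (a * a))) (fun a => e (w.2 * a + s * (a * a)))).
change (gauss_sum s w.1 * gauss_sum s w.2 =
        e (ker_phase s * dot2 w w) * gauss_sum s 0 ^+ 2).
by rewrite (gauss_sum_shift w.1) // (gauss_sum_shift w.2) // /dot2 mulrDr charD mulrACA.
Qed.

Definition ker_dilation (s : F) : F := - (2 * ker_phase s).

Lemma conv3_plane g z xu t : supported_on_plane g z ->
  conv3 g (Kker e) (xu, t) = \sum_u g (u, z) * Kker e (sub2 xu u, t - z).
Proof.
move=> gz; rewrite /conv3 sum_pair; apply: eq_bigr => u _.
by rewrite (bigD1 z) //= big1 ?addr0 // => s s_neq_z; rewrite gz ?mul0r.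
Qed.

Lemma conv3_plane_same g z xu : supported_on_plane g z -> conv3 g (Kker e) (xu, z) = 0.
Proof.
by move=> gz; rewrite (conv3_plane _ _ gz) big1 // => u _; rewrite subrr Kker_slice0 mulr0.
Qed.

(* The kernel is a unimodular multiple of [e(r |xu - u|^2)]; expanding the square
   leaves [e(r |xu|^2)] outside and [ext_sum] inside. *)
Lemma normCK_conv3_plane (g : F * F * F -> C) (z : F) (xu : F * F) (t : F) :
  supported_on_plane g z -> t != z ->
  `|conv3 g (Kker e) (xu, t)| ^+ 2 =
  (q ^+ 2)^-1 * `|ext_sum (fun u => g (u, z)) (ker_phase (t - z))
                          (scale2 (ker_dilation (t - z)) xu)| ^+ 2.
Proof.
move=> gz t_neq_z; have s_neq0 : t - z != 0 by rewrite subr_eq0.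
rewrite (conv3_plane _ _ gz); set r := ker_phase (t - z); set G := gauss_sum (t - z) 0.
have -> : \sum_u g (u, z) * Kker e (sub2 xu u, t - z) =
  (q ^+ 2)^-1 * e (r * dot2 xu xu) * G ^+ 2 *
  ext_sum (fun u => g (u, z)) r (scale2 (ker_dilation (t - z)) xu).
  rewrite /ext_sum mulr_sumr; apply: eq_bigr => u _; rewrite KkerE // -/r -/G.
  have -> : e (r * dot2 (sub2 xu u) (sub2 xu u)) = e (r * dot2 xu xu) *
      e (r * dot2 u u + dot2 (scale2 (ker_dilation (t - z)) xu) u).
    by rewrite -charD /ker_dilation -/r /dot2 /sub2 /scale2 /=; congr e; ring.
  by ring.
rewrite !normrM norm_char mulr1 -expr2 [`|G| ^+ 2]normCK /G gauss_sum_normCK //.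
rewrite ger0_norm ?invr_ge0 ?exprn_ge0 ?ler0n //.
by field; rewrite q_neq0.
Qed.

Definition incident (z z' t : F) (tau : quad) : bool :=
  [&& t != z, t != z' & diff4 (ker_dilation (t - z)) (ker_dilation (t - z')) tau == (0, 0)].

Lemma ker_dilation_lin s s' d f : s != 0 -> s' != 0 ->
  (ker_dilation s * d + ker_dilation s' * f == 0) = (s' * d + s * f == 0).
Proof.
move=> s_neq0 s'_neq0.
have -> : ker_dilation s * d + ker_dilation s' * f = (s' * d + s * f) / (2 * s * s').
  by rewrite /ker_dilation /ker_phase; field; rewrite s_neq0 s'_neq0 two_neq0 four_neq0.
by rewrite mulf_eq0 invr_eq0 !mulf_eq0 (negPf two_neq0) (negPf s_neq0) (negPf s'_neq0) !orbF.
Qed.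

Lemma incidentE z z' t tau : incident z z' t tau =
  [&& t != z, t != z',
      (t - z') * (sub2 tau.1.1.1 tau.1.1.2).1 + (t - z) * (sub2 tau.1.2 tau.2).1 == 0 &
      (t - z') * (sub2 tau.1.1.1 tau.1.1.2).2 + (t - z) * (sub2 tau.1.2 tau.2).2 == 0].
Proof.
rewrite /incident; have [//|t_neq_z] := eqVneq t z; have [//|t_neq_z'] := eqVneq t z'.
by rewrite /diff4 /add2 /scale2 xpair_eqE /= !ker_dilation_lin // subr_eq0.
Qed.

Lemma incident_trapezoid z z' t tau :
  incident z z' t tau -> trapezoid tau.1.1.1 tau.1.1.2 tau.1.2 tau.2.
Proof.
rewrite incidentE => /and4P [_ t_neq_z' /eqP eq1 /eqP eq2].
have s'_neq0 : t - z' != 0 by rewrite subr_eq0.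
have solve a b : (t - z') * a + (t - z) * b = 0 -> a = - (t - z) / (t - z') * b.
  by move/eqP; rewrite addr_eq0 => /eqP eq_a; rewrite -(mulKf s'_neq0 a) eq_a; field.
apply/existsP; exists (- (t - z) / (t - z')).
by apply/eqP; rewrite [LHS]surjective_pairing (solve _ _ eq1) (solve _ _ eq2).
Qed.

Lemma eq_of_sub2 (a b : F * F) : (sub2 a b).1 = 0 -> (sub2 a b).2 = 0 -> a = b.
Proof. by case: a b => [a1 a2] [b1 b2] /= /subr0_eq -> /subr0_eq ->. Qed.

Lemma incident_degenerate z z' t1 t2 tau : z != z' -> t1 != t2 ->
  incident z z' t1 tau -> incident z z' t2 tau ->
  tau.1.1.1 = tau.1.1.2 /\ tau.1.2 = tau.2.
Proof.
move=> z_neq_z' t12; rewrite !incidentE.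
move=> /and4P [_ _ /eqP eq11 /eqP eq12] /and4P [_ _ /eqP eq21 /eqP eq22].
have [d1 f1] := pencil_eq0 z_neq_z' t12 eq11 eq21.
have [d2 f2] := pencil_eq0 z_neq_z' t12 eq12 eq22.
by split; apply: eq_of_sub2.
Qed.

(* A non-degenerate quadruple lies on at most one plane pencil, and then it is a
   trapezoid; a degenerate one may lie on all [|F|] of them. *)
Lemma count_incident z z' tau : z != z' ->
  (\sum_t incident z z' t tau <=
   [&& tau.1.1.1 == tau.1.1.2 & tau.1.2 == tau.2] * #|F| +
   trapezoid tau.1.1.1 tau.1.1.2 tau.1.2 tau.2)%N.
Proof.
move=> z_neq_z'; have [_|nondeg] := boolP [&& _, _ & _].
  rewrite mul1n -sum1_card; apply: leq_trans (leq_addr _ _).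
  by apply: leq_sum => t _; apply: leq_b1.
rewrite mul0n add0n sum_nat_boolE.
have [->|[t0]] := set_0Vmem [set t | incident z z' t tau]; first by rewrite cards0.
rewrite inE => inc0; rewrite (incident_trapezoid inc0) /= -(cards1 t0).
apply/subset_leq_card/subsetP => t1; rewrite !inE => inc1.
apply/negPn/negP => t10; case: (incident_degenerate z_neq_z' t10 inc1 inc0) => e1 e2.
by move: nondeg; rewrite e1 e2 !eqxx.
Qed.

Lemma count_incident_in4 z z' A B : z != z' ->
  (\sum_t \sum_tau (in4 A B tau && incident z z' t tau) <=
   #|F| * (#|A| * #|B|) + Tcount A B)%N.
Proof.
move=> z_neq_z'; rewrite exchange_big /=.
apply: (@leq_trans (\sum_tau ([&& in4 A B tau, tau.1.1.1 == tau.1.1.2 & tau.1.2 == tau.2] * #|F|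
   + (in4 A B tau && trapezoid tau.1.1.1 tau.1.1.2 tau.1.2 tau.2)))).
  apply: leq_sum => tau _; case: (in4 A B tau); last by rewrite big1.
  exact: count_incident.
rewrite big_split /= -big_distrl /= mulnC leq_add //.
  rewrite leq_mul2l sum_nat_boolE -cardsX orbC.
  apply/orP; left; apply: leq_trans (leq_imset_card (fun p => (p.1, p.1, p.2, p.2)) _).
  apply/subset_leq_card/subsetP => -[[[u1 u2] u3] u4]; rewrite !inE /in4 /=.
  case/and3P => /and4P [u1A _ u3B _] /eqP <- /eqP <-.
  by apply/imsetP; exists (u1, u3); rewrite // inE u1A u3B.
rewrite sum_nat_boolE /Tcount; apply/eq_leq/eq_card => tau.
by rewrite !inE /in4 -!andbA.
Qed.

(* With [u4 = u1 - u2 + u3], the quadratic relation is twice each of the four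
   corner conditions (up to sign). *)
Lemma rectangle_of_diff4 tau :
  diff4 1 1 tau == (0, 0) -> phase4 1 1 tau == 0 ->
  rectangle tau.1.1.1 tau.1.1.2 tau.1.2 tau.2.
Proof.
case: tau => [[[[a1 a2] [b1 b2]] [c1 c2]] [d1 d2]].
rewrite /diff4 /phase4 /add2 /scale2 /sub2 /dot2 /= xpair_eqE !mul1r.
move=> /andP [/eqP eq1 /eqP eq2] /eqP eqQ.
have d1E : d1 = a1 - b1 + c1 by rewrite -[d1]addr0 -eq1; ring.
have d2E : d2 = a2 - b2 + c2 by rewrite -[d2]addr0 -eq2; ring.
subst d1 d2.
move: eqQ; set Q := (X in X = 0) => eqQ.
have corner_eq0 (X : F) : X * 2 = Q \/ X * 2 = - Q -> X == 0.
  move=> eqX; have : X * 2 == 0 by case: eqX => ->; rewrite ?eqQ ?oppr0.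
  by rewrite mulf_eq0 (negPf two_neq0) orbF.
rewrite /rectangle /corner /dot2 /sub2 /=.
by apply/and4P; split; apply: corner_eq0; [left | right | left | right]; rewrite /Q; ring.
Qed.

Lemma norm_sum_moment4_le h A : bounded2_on h A ->
  `|\sum_r moment4 h h r r 1 1| <= 16 * q ^+ 3 * (Rcount A)%:R.
Proof.
move=> hA; rewrite sum_moment4 normrM ger0_norm ?exprn_ge0 ?ler0n //.
rewrite [16 * q ^+ 3]mulrC -[q ^+ 3 * 16 * _]mulrA ler_pM2l ?exprn_gt0 ?q_gt0 //.
apply: le_trans (ler_norm_sum _ _ _) _.
pose rect tau := (diff4 1 1 tau == (0, 0)) && (phase4 1 1 tau == 0).
apply: le_trans (_ : _ <= \sum_tau 16 * (in4 A A tau && rect tau)%:R) _.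
  apply: ler_sum => tau _; rewrite normrM normr_nat -/(rect tau).
  case: (rect tau); rewrite ?andbT ?andbF.
  - by rewrite mulr1; apply: norm_weight4_le.
  - by rewrite !mulr0.
rewrite -mulr_sumr ler_pM2l ?ltr0n // -natr_sum ler_nat sum_nat_boolE.
apply/subset_leq_card/subsetP => tau; rewrite !inE => /andP [/and4P [-> -> -> ->]].
by case/andP=> *; apply: rectangle_of_diff4.
Qed.

Definition plane_phase (z t : F) : F := if t == z then 0 else ker_phase (t - z).

Lemma ker_phase_neq0 s : s != 0 -> ker_phase s != 0.
Proof. by move=> s_neq0; rewrite oppr_eq0 invr_eq0 !mulf_neq0. Qed.

Lemma plane_phase_inj z : injective (plane_phase z).
Proof.
have ker_phase_inj s1 s2 : ker_phase s1 = ker_phase s2 -> s1 = s2.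
  by move=> /oppr_inj /invr_inj; apply: mulfI; rewrite mulf_neq0.
move=> t1 t2; rewrite /plane_phase.
have [->|t1z] := eqVneq t1 z; have [->|t2z] := eqVneq t2 z => //.
- by move=> /esym/eqP; rewrite (negPf (ker_phase_neq0 _)) // subr_eq0.
- by move=> /eqP; rewrite (negPf (ker_phase_neq0 _)) // subr_eq0.
by move=> /ker_phase_inj /addIr.
Qed.

Lemma sim1_bounded2 g z :
  sim1_on_support g -> bounded2_on (fun u => g (u, z)) (slice_support g z).
Proof.
move=> g_sim1 u; rewrite inE; have [->|gu_neq0] := eqVneq (g (u, z)) 0.
  by rewrite normr0 mulr0.
by rewrite mulr1; case/andP: (g_sim1 _ gu_neq0).
Qed.

Lemma sum_conv3_plane4_le g z : supported_on_plane g z -> sim1_on_support g ->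
  \sum_t \sum_xu (`|conv3 g (Kker e) (xu, t)| ^+ 2) ^+ 2 <=
  16 * q^-1 * (Rcount (slice_support g z))%:R.
Proof.
move=> gz g_sim1; pose M r := moment4 (fun u => g (u, z)) (fun u => g (u, z)) r r 1 1.
have sliceE t : \sum_xu (`|conv3 g (Kker e) (xu, t)| ^+ 2) ^+ 2 =
    (q ^+ 4)^-1 * (if t == z then 0 else M (ker_phase (t - z))).
  have [->|t_neq_z] := eqVneq t z.
    by rewrite mulr0 big1 // => xu _; rewrite conv3_plane_same // normr0 !expr0n.
  under eq_bigr do rewrite (normCK_conv3_plane _ gz t_neq_z) exprMn.
  rewrite -mulr_sumr exprVn -exprM; congr (_ * _).
  under eq_bigr do rewrite expr2.
  by rewrite sum_ext_sum4 moment4_dilate // oppr_eq0 mulf_neq0 // ker_phase_neq0 // subr_eq0.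
under eq_bigr do rewrite sliceE; rewrite -mulr_sumr.
have -> : \sum_t (if t == z then 0 else M (ker_phase (t - z))) = \sum_r M r - M 0.
  rewrite [in RHS](reindex_inj (@plane_phase_inj z)) /= [in RHS](bigD1 z) //=.
  rewrite /plane_phase eqxx addrAC subrr add0r (bigD1 z) //= eqxx add0r.
  by apply: eq_bigr => t /negPf ->.
have sumM_ge0 : 0 <= \sum_r M r by apply: sumr_ge0_fin => r; apply: moment4_ge0.
have := norm_sum_moment4_le (sim1_bounded2 z g_sim1); rewrite ger0_norm // => sumM_le.
apply: le_trans (_ : _ <= (q ^+ 4)^-1 * (16 * q ^+ 3 * (Rcount (slice_support g z))%:R)) _.
  rewrite ler_pM2l ?invr_gt0 ?exprn_gt0 ?q_gt0 //; apply: le_trans sumM_le.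
  by rewrite gerBl moment4_ge0.
by rewrite le_eqVlt; apply: predU1l; field; rewrite q_neq0.
Qed.

Section TwoPlanes.
Variables (z z' : F) (gz gz' : F * F * F -> C).
Hypotheses (z_neq_z' : z != z').
Hypotheses (gz_z : supported_on_plane gz z) (gz'_z' : supported_on_plane gz' z').
Hypotheses (gz_sim1 : sim1_on_support gz) (gz'_sim1 : sim1_on_support gz').

Local Notation A := (slice_support gz z).
Local Notation B := (slice_support gz' z').
Local Notation a xu t := (conv3 gz (Kker e) (xu, t)).
Local Notation b xu t := (conv3 gz' (Kker e) (xu, t)).
Local Notation L2prod := (L2sq (fun x => conv3 gz (Kker e) x * conv3 gz' (Kker e) x)).

Lemma L2prod_slices : L2prod = \sum_t \sum_(xu : F * F) `|a xu t| ^+ 2 * `|b xu t| ^+ 2.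
Proof.
rewrite /L2sq sum_pair exchange_big; apply: eq_bigr => t _; apply: eq_bigr => xu _.
by rewrite normrM exprMn.
Qed.

Lemma slice_prod_le (t : F) : \sum_(xu : F * F) `|a xu t| ^+ 2 * `|b xu t| ^+ 2 <=
  16 * (q ^+ 2)^-1 * (\sum_tau (in4 A B tau && incident z z' t tau))%:R.
Proof.
have [->|t_neq_z] := eqVneq t z.
  rewrite big1 => [|xu _]; last by rewrite (conv3_plane_same _ gz_z) normr0 expr0n mul0r.
  by rewrite !mulr_ge0 ?invr_ge0 ?exprn_ge0 ?ler0n.
have [->|t_neq_z'] := eqVneq t z'.
  rewrite big1 => [|xu _]; last by rewrite (conv3_plane_same _ gz'_z') normr0 expr0n mulr0.
  by rewrite !mulr_ge0 ?invr_ge0 ?exprn_ge0 ?ler0n.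
rewrite (eq_bigr _ (fun xu _ => congr2 *%R (normCK_conv3_plane xu gz_z t_neq_z)
                                          (normCK_conv3_plane xu gz'_z' t_neq_z'))).
under eq_bigr do rewrite mulrACA.
rewrite -mulr_sumr sum_ext_sum4.
set M := moment4 _ _ _ _ _ _.
have M_ge0 : 0 <= M.
  by rewrite /M -sum_ext_sum4; apply: sumr_ge0_fin => x; rewrite mulr_ge0 ?exprn_ge0.
rewrite -(ger0_norm M_ge0).
apply: le_trans (ler_wpM2l _ (norm_moment4_le _ _ _ _ (sim1_bounded2 z gz_sim1)
                                                      (sim1_bounded2 z' gz'_sim1))) _.
  by rewrite mulr_ge0 ?invr_ge0 ?exprn_ge0 ?ler0n.
rewrite /incident t_neq_z t_neq_z' le_eqVlt; apply: predU1l.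
by field; rewrite q_neq0.
Qed.

Lemma L2prod_le_trapezoid :
  L2prod <= 16 * (q^-1 * #|A|%:R * #|B|%:R + (q ^+ 2)^-1 * (Tcount A B)%:R).
Proof.
rewrite L2prod_slices; apply: le_trans (ler_sum _ (fun t _ => slice_prod_le t)) _.
rewrite -mulr_sumr -natr_sum.
apply: le_trans (_ : _ <= 16 * (q ^+ 2)^-1 * (#|F| * (#|A| * #|B|) + Tcount A B)%:R) _.
  by rewrite ler_pM2l ?mulr_gt0 ?invr_gt0 ?exprn_gt0 ?q_gt0 // ler_nat count_incident_in4.
by rewrite natrD !natrM le_eqVlt; apply: predU1l; field; rewrite q_neq0.
Qed.

Lemma L2prod_le_rectangle : L2prod <= 16 * q^-1 * sqrtC ((Rcount A * Rcount B)%:R).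
Proof.
pose fa (p : F * (F * F)) := `|a p.2 p.1| ^+ 2.
pose fb (p : F * (F * F)) := `|b p.2 p.1| ^+ 2.
have -> : L2prod = \sum_p fa p * fb p by rewrite L2prod_slices sum_pair.
have sum_sq_le g (Rw : nat) :
    \sum_t \sum_(xu : F * F) (`|conv3 g (Kker e) (xu, t)| ^+ 2) ^+ 2 <= 16 * q^-1 * Rw%:R ->
    \sum_(p : F * (F * F)) (`|conv3 g (Kker e) (p.2, p.1)| ^+ 2) ^+ 2 <= 16 * q^-1 * Rw%:R.
  by rewrite sum_pair.
have fa_le := sum_sq_le _ _ (sum_conv3_plane4_le gz_z gz_sim1).
have fb_le := sum_sq_le _ _ (sum_conv3_plane4_le gz'_z' gz'_sim1).
have CS := CauchySchwarz_nneg (fun p => exprn_ge0 2 (normr_ge0 (a p.2 p.1)))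
                              (fun p => exprn_ge0 2 (normr_ge0 (b p.2 p.1))).
rewrite -(ler_pXn2r (n := 2)) ?nnegrE //; first last.
- by rewrite !mulr_ge0 ?invr_ge0 ?sqrtC_ge0 ?ler0n.
- by apply: sumr_ge0_fin => p; rewrite mulr_ge0 ?exprn_ge0.
apply: le_trans CS _.
rewrite exprMn sqrtCK natrM expr2 mulrACA.
by apply: ler_pM fa_le fb_le; apply: sumr_ge0_fin => p; rewrite !exprn_ge0.
Qed.

Lemma L2prod_le_Bq :
  L2prod <= 16%:R * (q^-1 * #|A|%:R * #|B|%:R + (q ^+ 2)^-1 * Bq C A B).
Proof.
rewrite /Bq /Num.min /Order.min; case: ifP => _; first exact: L2prod_le_trapezoid.
apply: le_trans L2prod_le_rectangle _.
have -> : 16 * q^-1 * sqrtC (Rcount A * Rcount B)%:R =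
          16 * ((q ^+ 2)^-1 * (q * sqrtC (Rcount A * Rcount B)%:R)).
  by field; rewrite q_neq0.
by rewrite ler_pM2l ?ltr0n // lerDr !mulr_ge0 ?invr_ge0 ?ler0n.
Qed.

End TwoPlanes.

End OddCharacteristic.

End Fourier.

Theorem lemma3p2 :
  exists c : nat,
  forall (F : finFieldType) (C : numClosedFieldType) (e : F -> C),
  2%N \notin [pchar F] ->
  ~ (exists y : F, y * y = -1) ->
  nontrivial_additive_character e ->
  forall (z z' : F) (gz gz' : F * F * F -> C),
  z != z' ->
  supported_on_plane gz z -> supported_on_plane gz' z' ->
  sim1_on_support gz -> sim1_on_support gz' ->
  let Gz := slice_support gz z in
  let Gz' := slice_support gz' z' in
  L2sq (fun x => conv3 gz (Kker e) x * conv3 gz' (Kker e) x)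
  <= c%:R * ((#|F|%:R)^-1 * #|Gz|%:R * #|Gz'|%:R
             + (#|F|%:R ^+ 2)^-1 * Bq C Gz Gz').
Proof.
exists 16%N => F C e two_nchar _ [charD [char_neq0 char_nontrivial]] z z' gz gz'.
move=> z_neq_z' gz_z gz'_z' gz_sim1 gz'_sim1 /=.
have two_neq0 : (2 : F) != 0 by rewrite inE /= in two_nchar.
exact: L2prod_le_Bq.
Qed.
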